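(* If an ES combination operator $\nabla$ satisfies (ESF7) and (ESF8W), then $\nabla$ satisfies (ESF-P).
   Context: Setting: epistemic space $(\mathcal E,B,\mathcal L_{\mathcal P})$ ($\mathcal E$ nonempty, $B:\mathcal E\to$ propositional formulas over finite $\mathcal P$, image modulo equivalence exactly the consistent formulas); agents: well-ordered set $\mathcal S$; society: nonempty finite $N\subseteq\mathcal S$; $N$-profile $\Phi:N\to\mathcal E$, $E_i=\Phi(i)$, identified with $E_i$ if $N=\{i\}$; $\Phi\upharpoonright_M$ restriction; partition $\{N_1,N_2\}$: nonempty disjoint parts with union $N$. An ES combination operator maps (profile, $E$) to $\nabla(\Phi,E)\in\mathcal E$. (ESF7): $B(\nabla(\Phi\upharpoonright_{N_1},E))\wedge B(\nabla(\Phi\upharpoonright_{N_2},E))\vdash B(\nabla(\Phi,E))$ for all partitions, profiles, $E$. (ESF8W): if $B(\nabla(\Phi\upharpoonright_{N_1},E))\wedge B(\nabla(\Phi\upharpoonright_{N_2},E))\nvdash\bot$ then $B(\nabla(\Phi,E))\vdash B(\nabla(\Phi\upharpoonright_{N_1},E))\vee B(\nabla(\Phi\upharpoonright_{N_2},E))$. (ESF-P): for every society $N$, $N$-profile $\Phi$ and $E,E'\in\mathcal E$, if $\bigwedge_{i\in N}B(\nabla(E_i,E))\nvdash\bot$ and $B(\nabla(E_i,E))\wedge B(E')\vdash\bot$ for all $i\in N$, then $B(\nabla(\Phi,E))\wedge B(E')\vdash\bot$. *)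

From mathcomp Require Import all_boot.
Set Implicit Arguments.
Unset Strict Implicit.
Unset Printing Implicit Defensive.

Inductive formula (P : Type) : Type :=
  | FVar of P
  | FTop
  | FBot
  | FNeg of formula P
  | FAnd of formula P & formula P
  | FOr of formula P & formula P
  | FImp of formula P & formula P.

Arguments FTop {P}.
Arguments FBot {P}.

Fixpoint fsat (P : Type) (v : P -> bool) (f : formula P) : bool :=
  match f with
  | FVar p => v p
  | FTop => true
  | FBot => false
  | FNeg g => ~~ fsat v g
  | FAnd g h => fsat v g && fsat v h
  | FOr g h => fsat v g || fsat v h
  | FImp g h => fsat v g ==> fsat v h
  end.

(** Classical propositional consequence  f |- g  (P finite; by soundness and
    completeness this coincides with derivability). *)
Definition entails (P : Type) (f g : formula P) : Prop :=
  forall v : P -> bool, fsat v f -> fsat v g.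

Definition consistent (P : Type) (f : formula P) : Prop := ~ entails f FBot.

Definition fequiv (P : Type) (f g : formula P) : Prop :=
  entails f g /\ entails g f.

Definition epistemic_space (P : finType) (E : Type) (B : E -> formula P) : Prop :=
  inhabited E /\
  (forall e : E, consistent (B e)) /\
  (forall f : formula P, consistent f -> exists e : E, fequiv (B e) f).

Definition well_order (S : Type) (lt : S -> S -> Prop) : Prop :=
  (forall x, ~ lt x x) /\
  (forall x y z, lt x y -> lt y z -> lt x z) /\
  (forall x y, x = y \/ lt x y \/ lt y x) /\
  well_founded lt.

(** * Profiles.  An N-profile Phi : N -> E (N a society, i.e. a nonempty finite
    subset of S) is represented as the partial function S -> option E whose
    domain is N.  *)
Definition profile (S E : Type) := S -> option E.

Definition in_soc (S E : Type) (Phi : profile S E) (i : S) : bool := isSome (Phi i).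

Definition is_profile (S : eqType) (E : Type) (Phi : profile S E) : Prop :=
  (exists i, in_soc Phi i) /\
  (exists l : seq S, forall i, in_soc Phi i -> i \in l).

Definition restrict (S E : Type) (Phi : profile S E) (M : pred S) : profile S E :=
  fun i => if M i then Phi i else None.

(** the single-agent profile {i} |-> E_i, identified with E_i *)
Definition single (S : eqType) (E : Type) (Phi : profile S E) (i : S) : profile S E :=
  restrict Phi (pred1 i).

Definition is_partition (S E : Type) (Phi : profile S E) (N1 N2 : pred S) : Prop :=
  (exists i, N1 i) /\ (exists i, N2 i) /\
  (forall i, ~~ (N1 i && N2 i)) /\
  (forall i, in_soc Phi i = N1 i || N2 i).

Definition comb_op (S E : Type) := profile S E -> E -> E.

Definition ESF7 (P : finType) (S : eqType) (E : Type) (B : E -> formula P) (nabla : comb_op S E) : Prop :=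
  forall (Phi : profile S E), is_profile Phi ->
  forall (N1 N2 : pred S), is_partition Phi N1 N2 ->
  forall e : E,
    entails (FAnd (B (nabla (restrict Phi N1) e)) (B (nabla (restrict Phi N2) e)))
            (B (nabla Phi e)).

Definition ESF8W (P : finType) (S : eqType) (E : Type) (B : E -> formula P) (nabla : comb_op S E) : Prop :=
  forall (Phi : profile S E), is_profile Phi ->
  forall (N1 N2 : pred S), is_partition Phi N1 N2 ->
  forall e : E,
    consistent (FAnd (B (nabla (restrict Phi N1) e)) (B (nabla (restrict Phi N2) e))) ->
    entails (B (nabla Phi e))
            (FOr (B (nabla (restrict Phi N1) e)) (B (nabla (restrict Phi N2) e))).

(** (ESF-P).  The consistency of the finite conjunction  /\_{i in N} B(nabla(E_i,E))
    is expressed as joint satisfiability of its conjuncts. *)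
Definition ESFP (P : finType) (S : eqType) (E : Type) (B : E -> formula P)
    (nabla : comb_op S E) : Prop :=
  forall (Phi : profile S E), is_profile Phi ->
  forall e e' : E,
    (exists v : P -> bool, forall i, in_soc Phi i -> fsat v (B (nabla (single Phi i) e))) ->
    (forall i, in_soc Phi i -> entails (FAnd (B (nabla (single Phi i) e)) (B e')) FBot) ->
    entails (FAnd (B (nabla Phi e)) (B e')) FBot.

From mathcomp Require Import all_boot.
From Stdlib Require Import FunctionalExtensionality.

Set Implicit Arguments.
Unset Strict Implicit.
Unset Printing Implicit Defensive.

(* Induction on the society: split off one agent [a], so that N = {a} + N'.
   A valuation modelling every individual outcome models the outcome for N'
   (induction) and for {a}, hence by (ESF7) the outcome for N; in particular
   the two parts are jointly consistent, so by (ESF8W) every model of the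
   outcome for N models the outcome for {a} or for N', both of which clash
   with E'. *)

Lemma in_soc_restrict (S E : Type) (Phi : profile S E) (M : pred S) (i : S) :
  in_soc (restrict Phi M) i = M i && in_soc Phi i.
Proof. by rewrite /in_soc /restrict; case: (M i). Qed.

Lemma single_restrict (S : eqType) (E : Type) (Phi : profile S E) (M : pred S) (i : S) :
  M i -> single (restrict Phi M) i = single Phi i.
Proof.
move=> Mi; apply: functional_extensionality => k.
by rewrite /single /restrict /=; case: eqP => // ->; rewrite Mi.
Qed.

Lemma single_soc1 (S : eqType) (E : Type) (Phi : profile S E) (a : S) :
  (forall i, in_soc Phi i -> i = a) -> single Phi a = Phi.
Proof.
move=> soc_a; apply: functional_extensionality => k; rewrite /single /restrict /=.
case: eqP => // /eqP ka; case Phik: (Phi k) => //.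
by move: ka; rewrite (soc_a k) ?eqxx // /in_soc Phik.
Qed.

Definition others (S : eqType) (E : Type) (Phi : profile S E) (a : S) : pred S :=
  fun k => in_soc Phi k && (k != a).

Lemma in_soc_others (S : eqType) (E : Type) (Phi : profile S E) (a i : S) :
  in_soc (restrict Phi (others Phi a)) i = others Phi a i.
Proof. by rewrite in_soc_restrict /others andbAC andbb. Qed.

Lemma partition_single_others (S : eqType) (E : Type) (Phi : profile S E) (a j : S) :
  in_soc Phi a -> others Phi a j -> is_partition Phi (pred1 a) (others Phi a).
Proof.
move=> soc_a others_j; split; first by exists a; rewrite /= eqxx.
split; first by exists j.
split; first by move=> k; rewrite /others /=; case: (k == a); rewrite ?andbF.
by move=> k; rewrite /others /=; case: eqVneq => [->|]; rewrite ?soc_a ?andbT.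
Qed.

Section Aggregation.

Variables (P : finType) (E : Type) (B : E -> formula P) (S : eqType).
Variables (nabla : comb_op S E) (e e' : E).
Hypotheses (esf7 : ESF7 B nabla) (esf8w : ESF8W B nabla).

Local Notation outcome Phi := (B (nabla Phi e)).
Local Notation clashes f := (entails (FAnd f (B e')) FBot).

Lemma partition_model_clash (v : P -> bool) (Phi : profile S E) (N1 N2 : pred S) :
  is_profile Phi -> is_partition Phi N1 N2 ->
  fsat v (outcome (restrict Phi N1)) -> fsat v (outcome (restrict Phi N2)) ->
  clashes (outcome (restrict Phi N1)) -> clashes (outcome (restrict Phi N2)) ->
  fsat v (outcome Phi) /\ clashes (outcome Phi).
Proof.
move=> prof part v1 v2 clash1 clash2.
have v12 : fsat v (FAnd (outcome (restrict Phi N1)) (outcome (restrict Phi N2))).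
  by rewrite /= v1 v2.
split; first exact: esf7 v12.
move=> w /= /andP [w_out w_e'].
have consistent12 : consistent (FAnd (outcome (restrict Phi N1)) (outcome (restrict Phi N2))).
  by move/(_ v v12).
have /orP [w1 | w2] := esf8w prof part consistent12 w_out.
- by apply: (clash1 w); apply/andP.
- by apply: (clash2 w); apply/andP.
Qed.

Lemma society_model_clash (v : P -> bool) (l : seq S) (Phi : profile S E) :
  (forall i, in_soc Phi i -> i \in l) -> (exists i, in_soc Phi i) ->
  (forall i, in_soc Phi i -> fsat v (outcome (single Phi i))) ->
  (forall i, in_soc Phi i -> clashes (outcome (single Phi i))) ->
  fsat v (outcome Phi) /\ clashes (outcome Phi).
Proof.
elim: l Phi => [|a l IH] Phi soc_l [i soc_i] models clash.
  by have := soc_l i soc_i.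
have [soc_a | nsoc_a] := boolP (in_soc Phi a); last first.
  apply: IH => [k soc_k||k|k]; [|by exists i|exact: models|exact: clash].
  by have := soc_l k soc_k; rewrite inE; case: eqP soc_k nsoc_a => // -> ->.
have others_l k : others Phi a k -> k \in l.
  by case/andP=> soc_k ka; have := soc_l k soc_k; rewrite inE (negbTE ka).
have [[j _ others_j] | no_others] := @hasP _ (others Phi a) l; last first.
  rewrite -(single_soc1 (Phi := Phi) (a := a)).
    by split; [apply: models | apply: clash].
  move=> k soc_k; apply/eqP/negPn/negP => ka.
  have others_k : others Phi a k by rewrite /others soc_k ka.
  by apply: no_others; exists k; first exact: others_l.
have part := partition_single_others soc_a others_j.
have prof : is_profile Phi by split; [exists a | exists (a :: l)].
have [v_rest clash_rest] : fsat v (outcome (restrict Phi (others Phi a))) /\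
    clashes (outcome (restrict Phi (others Phi a))).
  apply: IH => [k||k|k]; rewrite ?in_soc_others.
  - exact: others_l.
  - by exists j; rewrite in_soc_others.
  - by move=> others_k; rewrite single_restrict //; apply: models; case/andP: others_k.
  - by move=> others_k; rewrite single_restrict //; apply: clash; case/andP: others_k.
exact: partition_model_clash prof part (models a soc_a) v_rest (clash a soc_a) clash_rest.
Qed.

End Aggregation.

Theorem mainTheorem9 (P : finType) (E : Type) (B : E -> formula P)
  (S : eqType) (ltS : S -> S -> Prop) (nabla : comb_op S E) :
  epistemic_space B -> well_order ltS ->
  ESF7 B nabla -> ESF8W B nabla -> ESFP B nabla.
Proof.
move=> _ _ esf7 esf8w Phi [soc_ne [l soc_l]] e e' [v models] clash.
by have [] := society_model_clash esf7 esf8w soc_l soc_ne models clash.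
Qed.
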